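(* Let $0<a\le1$. For $x>0$ let $H(a,x):=\dfrac{e^{(1-a)x}}{e^x-1}-\dfrac1x$, and for $x,y>0$ let $$\mathcal{H}(a;x,y):=\frac{H(a,x+y)}{e^y-1}+\frac{H(1,y)}{x+y}.$$ Then $\mathcal{H}(a;x,y)<0$ for all $x,y>0$ if and only if $a\ge1/2$. *)

From Stdlib Require Import Reals.
Open Scope R_scope.

Definition Hfun (a x : R) : R :=
  exp ((1 - a) * x) / (exp x - 1) - 1 / x.

Definition calH (a x y : R) : R :=
  Hfun a (x + y) / (exp y - 1) + Hfun 1 y / (x + y).

(* Clearing denominators, with [s = x + y], [calH a x y < 0] is equivalent to
   [e^((1-a)s) * s / (e^s - 1) < (e^y - 1) / y].  The right-hand side exceeds 1
   and tends to 1 as [y -> 0], so the condition holds for all [x, y > 0] iff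
   [s e^((1-a)s) <= e^s - 1] for all [s > 0].  For [a >= 1/2] this follows from
   [s e^(s/2) < e^s - 1], i.e. [2 sinh(s/2) > s]; for [a < 1/2] the difference
   [e^s - 1 - s e^((1-a)s) = (a - 1/2) s^2 + O(s^3)] is negative for small [s]. *)
From Coquelicot Require Import Coquelicot.
From Stdlib Require Import Reals Lra.
Open Scope R_scope.

Lemma derive_pos_lt (f df : R -> R) (u : R) :
  0 < u -> (forall t, 0 <= t <= u -> is_derive f t (df t)) ->
  (forall t, 0 < t <= u -> 0 < df t) -> f 0 < f u.
Proof.
  intros hu hder hpos.
  destruct (MVT_cor2 f df 0 u hu) as [c [hmvt hc]].
  { intros t ht; apply is_derive_Reals, hder, ht. }
  assert (0 < df c * (u - 0)) by (apply Rmult_lt_0_compat; [apply hpos|]; lra).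
  lra.
Qed.

Lemma exp_lt_inv_1_sub (u : R) : 0 < u < 1 -> exp u < / (1 - u).
Proof.
  intros hu.
  assert (hneg : 1 + - u < exp (- u)) by (apply exp_ineq1; lra).
  rewrite exp_Ropp in hneg.
  rewrite <- (Rinv_inv (exp u)).
  apply Rinv_lt_contravar; [|lra].
  apply Rmult_lt_0_compat; [lra | apply Rinv_0_lt_compat, exp_pos].
Qed.

Lemma mul_exp_half_lt_exp_sub1 (s : R) : 0 < s -> s * exp (s / 2) < exp s - 1.
Proof.
  intros hs.
  assert (hsq : forall t, exp t = exp (t / 2) * exp (t / 2)).
  { intros t; rewrite <- exp_plus; f_equal; field. }
  enough (0 - 0 * exp (0 / 2) < exp s - 1 - s * exp (s / 2)) by lra.
  replace (0 - 0 * exp (0 / 2)) with (exp 0 - 1 - 0 * exp (0 / 2))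
    by (rewrite exp_0; ring).
  apply (derive_pos_lt (fun t => exp t - 1 - t * exp (t / 2))
           (fun t => exp (t / 2) * (exp (t / 2) - 1 - t / 2))); [lra | |].
  - intros t _; auto_derive; [easy|]; rewrite (hsq t); unfold Rdiv; ring.
  - intros t ht.
    apply Rmult_lt_0_compat; [apply exp_pos|].
    assert (1 + t / 2 < exp (t / 2)) by (apply exp_ineq1; lra); lra.
Qed.

(* The witness [s = (c - a) / (a c)] with [c = 1 - a] is where [a t <= (c - a) / c]
   and [a c t <= c - a] hold for [t <= s], so that [e^(at) < 1 / (1 - at) <= 1 + ct]. *)
Lemma exp_sub1_lt_mul_exp (a : R) : 0 < a < 1 / 2 ->
  exists s, 0 < s /\ exp s - 1 < s * exp ((1 - a) * s).
Proof.
  intros ha.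
  set (c := 1 - a).
  assert (hc : a < c) by (unfold c; lra).
  set (s := (c - a) / (a * c)).
  assert (hs : 0 < s) by (apply Rdiv_lt_0_compat; nra).
  exists s; split; [exact hs|].
  assert (hexp_lt : forall t, 0 < t <= s -> exp (a * t) < 1 + c * t).
  { intros t ht.
    assert (hact : a * c * t <= c - a).
    { replace (c - a) with (a * c * s) by (unfold s; field; nra).
      apply Rmult_le_compat_l; nra. }
    assert (hat : a * t < 1) by nra.
    apply (Rlt_le_trans _ (/ (1 - a * t))); [apply exp_lt_inv_1_sub; nra|].
    apply (Rmult_le_reg_r (1 - a * t)); [lra|].
    rewrite Rinv_l by lra; nra. }
  enough (0 * exp (c * 0) - exp 0 + 1 < s * exp (c * s) - exp s + 1) by
    (rewrite exp_0 in *; unfold c in *; lra).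
  apply (derive_pos_lt (fun t => t * exp (c * t) - exp t + 1)
           (fun t => exp (c * t) * (1 + c * t - exp (a * t)))); [exact hs | |].
  - intros t _; auto_derive; [easy|].
    replace (exp t) with (exp (c * t) * exp (a * t))
      by (rewrite <- exp_plus; f_equal; unfold c; ring).
    ring.
  - intros t ht.
    apply Rmult_lt_0_compat; [apply exp_pos|].
    pose proof (hexp_lt t ht); lra.
Qed.

Lemma calH_lt0_iff (a x y : R) : 0 < x -> 0 < y ->
  calH a x y < 0 <->
  exp ((1 - a) * (x + y)) * (y * (x + y)) < (exp (x + y) - 1) * (exp y - 1).
Proof.
  intros hx hy.
  assert (hexs : 1 + (x + y) < exp (x + y)) by (apply exp_ineq1; lra).
  assert (hexy : 1 + y < exp y) by (apply exp_ineq1; lra).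
  set (D := (exp (x + y) - 1) * (exp y - 1) * (y * (x + y))).
  assert (hD : 0 < D) by (unfold D; apply Rmult_lt_0_compat; nra).
  assert (hcalH : calH a x y =
    (exp ((1 - a) * (x + y)) * (y * (x + y)) - (exp (x + y) - 1) * (exp y - 1)) / D).
  { unfold calH, Hfun, D; rewrite Rminus_diag, Rmult_0_l, exp_0.
    field; repeat split; lra. }
  rewrite hcalH; split; intros hlt.
  - apply Rnot_le_lt; intros hge.
    apply (Rlt_not_le _ _ hlt), Rdiv_le_0_compat; lra.
  - apply (Rmult_lt_reg_r D); [exact hD|].
    unfold Rdiv; rewrite Rmult_assoc, Rinv_l by lra; lra.
Qed.

Lemma calH_lt0 (a x y : R) : 1 / 2 <= a -> 0 < x -> 0 < y -> calH a x y < 0.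
Proof.
  intros ha hx hy; apply calH_lt0_iff; [exact hx | exact hy |].
  set (s := x + y).
  assert (hs : 0 < s) by (unfold s; lra).
  assert (hexs : 1 + s < exp s) by (apply exp_ineq1; lra).
  assert (hexy : 1 + y < exp y) by (apply exp_ineq1; lra).
  assert (hE : exp ((1 - a) * s) <= exp (s / 2)).
  { destruct (Rle_lt_or_eq_dec _ _ ha) as [hlt | <-].
    - left; apply exp_increasing; nra.
    - right; f_equal; field. }
  pose proof (mul_exp_half_lt_exp_sub1 s hs) as hhalf.
  apply (Rle_lt_trans _ (exp (s / 2) * (y * s))); [apply Rmult_le_compat_r; nra|].
  apply (Rlt_le_trans _ ((exp s - 1) * y)); [nra|].
  apply Rmult_le_compat_l; lra.
Qed.

(* With [g := s e^((1-a)s) / (e^s - 1) > 1], small [y] gives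
   [e^y - 1 < y / (1 - y) <= g y] as soon as [y <= 1 - 1/g]. *)
Lemma calH_not_lt0 (a s : R) : 0 < s -> exp s - 1 < s * exp ((1 - a) * s) ->
  exists x y, 0 < x /\ 0 < y /\ ~ calH a x y < 0.
Proof.
  intros hs hgt.
  assert (hexs : 1 + s < exp s) by (apply exp_ineq1; lra).
  set (E := exp ((1 - a) * s)) in *.
  set (g := s * E / (exp s - 1)).
  assert (hsE : s * E = g * (exp s - 1)) by (unfold g; field; lra).
  assert (hg : 1 < g) by nra.
  set (y := Rmin (s / 2) (1 - / g)).
  assert (hg' : 0 < / g < 1).
  { split; [apply Rinv_0_lt_compat; lra|].
    rewrite <- Rinv_1; apply Rinv_lt_contravar; lra. }
  assert (hy0 : 0 < y) by (apply Rmin_glb_lt; lra).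
  assert (hys : y <= s / 2) by apply Rmin_l.
  assert (hyg : y <= 1 - / g) by apply Rmin_r.
  assert (hexy : exp y - 1 < y * g).
  { assert (hinv : / (1 - y) <= g).
    { rewrite <- (Rinv_inv g); apply Rinv_le_contravar; lra. }
    assert (exp y < / (1 - y)) by (apply exp_lt_inv_1_sub; lra).
    assert (y * / (1 - y) <= y * g) by (apply Rmult_le_compat_l; lra).
    assert (/ (1 - y) * (1 - y) = 1) by (apply Rinv_l; lra).
    nra. }
  exists (s - y), y; repeat split; [lra | lra |].
  rewrite calH_lt0_iff by lra.
  replace (s - y + y) with s by ring; fold E.
  apply Rle_not_lt.
  assert ((exp s - 1) * (exp y - 1) < (exp s - 1) * (y * g))
    by (apply Rmult_lt_compat_l; lra).
  nra.
Qed.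

Theorem lemma3p10 (a : R) (ha0 : 0 < a) (ha1 : a <= 1) :
  (forall x y : R, 0 < x -> 0 < y -> calH a x y < 0) <-> 1 / 2 <= a.
Proof.
  split.
  - intros hneg; apply Rnot_lt_le; intros ha.
    destruct (exp_sub1_lt_mul_exp a (conj ha0 ha)) as [s [hs hgt]].
    destruct (calH_not_lt0 a s hs hgt) as [x [y [hx [hy hnot]]]].
    exact (hnot (hneg x y hx hy)).
  - intros ha x y; exact (calH_lt0 a x y ha).
Qed.
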